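(* Let $(\mathbf c,\mathbf g)\in\mathbf C^5_{\rm aut}$ with $\operatorname{Hom}(N_{\mathbf c},\mathbb G_{\mathbf g})=0$, and let $\mathbf m\in\mathbf M_{\mathbf c}$ be $|N_{\mathbf c}|^+$-free over $(\mathbf c,\mathbf g)$. Then $\operatorname{Hom}(N_{\mathbf c},\mathcal Z(H_{\mathbf m}))\subseteq\operatorname{Hom}(N_{\mathbf c},H_{\mathbf c})$, i.e. every homomorphism $N_{\mathbf c}\to\mathcal Z(H_{\mathbf m})$ has image contained in $H_{\mathbf c}$.
   Context: Groups are not assumed abelian; $\mathcal Z(H)$ is the center of $H$; $J_p$ is the additive group of $p$-adic integers. $\mathbf C^4_{\rm aut}$: tuples $\mathbf c=(L_{\mathbf c},N_{\mathbf c},H_{\mathbf c},h_{\mathbf c},h^*_{\mathbf c},F_{\mathbf c},(Q^{\bar s}_{\mathbf c}),H^*_{\mathbf c},\mathbb P_{\mathbf c})$: $L_{\mathbf c},H_{\mathbf c}$ groups; $F_{\mathbf c}:L_{\mathbf c}\to\operatorname{Aut}(H_{\mathbf c})$ injective homomorphism, $F^\ell_{\mathbf c}:=F_{\mathbf c}(\ell)$; $N_{\mathbf c}\trianglelefteq L_{\mathbf c}$; $h_{\mathbf c}:H_{\mathbf c}\to N_{\mathbf c}$ epimorphism with kernel $\mathcal Z(H_{\mathbf c})$ and $F_{\mathbf c}(h_{\mathbf c}(a))=(x\mapsto axa^{-1})$; $h^*_{\mathbf c}:N_{\mathbf c}\to H_{\mathbf c}$ a map with $h_{\mathbf c}\circ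 h^*_{\mathbf c}=\mathrm{id}$; $(b_1,\dots,b_n)\in Q^{\bar s}_{\mathbf c}$ iff $\sum_is_iF^{b_i}_{\mathbf c}\restriction\mathcal Z(H_{\mathbf c})=0$ ($\bar s\in\mathbb Z^n$); $\mathcal Z(H_{\mathbf c})$ reduced; $H^*_{\mathbf c}\le H_{\mathbf c}$, $H_{\mathbf c}=\bigcup_{x\in\mathcal Z(H_{\mathbf c})}H^*_{\mathbf c}x$, $\mathcal Z(H^*_{\mathbf c})=\mathcal Z(H_{\mathbf c})\cap H^*_{\mathbf c}$; $\mathbb P_{\mathbf c}$ = primes $p$ such that $\mathcal Z(H_{\mathbf c})$ has a nonzero element of $p$-power order (then so does $\mathcal Z(H^*_{\mathbf c})$) or $J_p$ embeds in $\mathcal Z(H_{\mathbf c})$ (then $J_p$ embeds in $\mathcal Z(H^*_{\mathbf c})$); $\mathcal Z(H_{\mathbf c})/\mathcal Z(H^*_{\mathbf c})$ torsion-free and $p$-divisible for all $p\notin\mathbb P_{\mathbf c}$. $\mathbf C^5_{\rm aut}$: pairs $(\mathbf c,\mathbf g)$, $\mathbf c\in\mathbf C^4_{\rm aut}$, $\mathbf g=(\mathbb G_{\mathbf g},(F^\ell_{\mathbf g})_{\ell\in L_{\mathbf c}})$ with $\mathbb G_{\mathbf g}$ reduced torsion-free abelian, no $J_p$ embeddable, $F^\ell_{\mathbf g}\in\operatorname{Aut}(\mathbb G_{\mathbf g})$, and $(b_i)\in Q^{\bar s}_{\mathbf c}\Rightarrow\sum_is_iF^{b_i}_{\mathbf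 g}=0$. $\mathbf M_{\mathbf c}$ (for $(\mathbf c,\mathbf g)\in\mathbf C^5_{\rm aut}$): pairs $(\mathbf m,\mathbf g)\in\mathbf C^5_{\rm aut}$ (same $\mathbf g$) with $L_{\mathbf m}=L_{\mathbf c}$, $N_{\mathbf m}=N_{\mathbf c}$, $H_{\mathbf c}\subseteq H_{\mathbf m}$, $h_{\mathbf c}\subseteq h_{\mathbf m}$, $h^*_{\mathbf m}=h^*_{\mathbf c}$, $F^\ell_{\mathbf c}\subseteq F^\ell_{\mathbf m}$, $Q^{\bar s}_{\mathbf m}=Q^{\bar s}_{\mathbf c}$, $H_{\mathbf m}$ generated by $\mathcal Z(H_{\mathbf m})\cup H_{\mathbf c}$, $\mathcal Z(H_{\mathbf c})=\mathcal Z(H_{\mathbf m})\cap H_{\mathbf c}$, $\mathbb P_{\mathbf m}=\mathbb P_{\mathbf c}$, $H^*_{\mathbf m}=H^*_{\mathbf c}$. $\mathbf m_1\le_{\mathbf c}\mathbf m_2$ means $H_{\mathbf m_1}\subseteq H_{\mathbf m_2}$, $h_{\mathbf m_1}\subseteq h_{\mathbf m_2}$, $F^\ell_{\mathbf m_1}\subseteq F^\ell_{\mathbf m_2}$ for all $\ell$. $\mathbf m'\in\mathbf M_{\mathbf c}$ is free over $(\mathbf c,\mathbf g)$ if there are injective homomorphisms $f_\xi:\mathbb G_{\mathbf g}\to\mathcal Z(H_{\mathbf m'})$ ($\xi<\zeta$) with $f_\xi\circ F^\ell_{\mathbf g}=F^\ell_{\mathbf m'}\circ f_\xi$ for all $\ell$,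 such that $\mathcal Z(H_{\mathbf m'})=\bigoplus_{\xi<\zeta}f_\xi(\mathbb G_{\mathbf g})\oplus\mathcal Z(H_{\mathbf c})$. $\mathbf m$ is $\mu$-free over $(\mathbf c,\mathbf g)$ if for every subgroup $G'$ of $\mathcal Z(H_{\mathbf m})/\mathcal Z(H_{\mathbf c})$ of cardinality $<\mu$ there is $\mathbf m'\in\mathbf M_{\mathbf c}$ with $\mathbf m'\le_{\mathbf c}\mathbf m$, free over $(\mathbf c,\mathbf g)$, and $G'\subseteq\mathcal Z(H_{\mathbf m'})/\mathcal Z(H_{\mathbf c})$. *)

From mathcomp Require Import all_boot all_algebra.
From Stdlib Require List.

Set Implicit Arguments.
Unset Strict Implicit.
Unset Printing Implicit Defensive.

Import GRing.Theory.
Local Open Scope ring_scope.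

Record grp := Grp {
  gcar :> Type;
  gmul : gcar -> gcar -> gcar;
  ginv : gcar -> gcar;
  gone : gcar;
  gmulA : forall x y z, gmul x (gmul y z) = gmul (gmul x y) z;
  gmul1 : forall x, gmul gone x = x;
  gmulV : forall x, gmul (ginv x) x = gone }.

Arguments gmul {g}.
Arguments ginv {g}.
Arguments gone {g}.

Definition grp_of_zmod (G : zmodType) : grp :=
  @Grp G +%R -%R 0 (@addrA G) (@add0r G) (@addNr G).

Section Grp.
Variable T : grp.

Fixpoint gpow (x : T) (n : nat) : T :=
  match n with 0%N => gone | n'.+1 => gmul x (gpow x n') end.

Definition zpow (x : T) (z : int) : T :=
  match z with Posz n => gpow x n | Negz n => ginv (gpow x n.+1) end.

Definition gprod (s : seq T) : T := foldr gmul gone s.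

Definition subgroup (S : T -> Prop) : Prop :=
  [/\ S gone, (forall x y, S x -> S y -> S (gmul x y))
    & (forall x, S x -> S (ginv x))].

Definition normal_sub (S : T -> Prop) : Prop :=
  subgroup S /\ forall n l, S n -> S (gmul (gmul l n) (ginv l)).

Definition center (S : T -> Prop) (x : T) : Prop :=
  S x /\ forall y, S y -> gmul x y = gmul y x.

Definition generated (A : T -> Prop) (x : T) : Prop :=
  forall S, subgroup S -> (forall y, A y -> S y) -> S x.

Definition reduced (A : T -> Prop) : Prop :=
  forall D : T -> Prop, subgroup D -> (forall x, D x -> A x) ->
    (forall x n, D x -> (0 < n)%N -> exists2 y, D y & gpow y n = x) ->
    forall x, D x -> x = gone.

Definition quot_torsion_free (A B : T -> Prop) : Prop :=
  forall x n, A x -> (0 < n)%N -> B (gpow x n) -> B x.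

Definition quot_p_divisible (A B : T -> Prop) (p : nat) : Prop :=
  forall x, A x -> exists2 y, A y & B (gmul x (ginv (gpow y p))).

Definition has_p_torsion (A : T -> Prop) (p : nat) : Prop :=
  exists x, [/\ A x, x <> gone & exists k, gpow x (p ^ k) = gone].

End Grp.

Arguments gpow {T}.
Arguments zpow {T}.
Arguments gprod {T}.

(* The p-adic integers J_p, as compatible sequences of residues:
   a : nat -> int with 0 <= a n < p^n and a (n+1) = a n mod p^n.          *)

Definition padic (p : nat) (a : nat -> int) : Prop :=
  forall n, (0 <= a n)%R /\ (a n < (p ^ n)%N%:Z)%R /\
            ((a n.+1) %% (p ^ n)%N%:Z)%Z = a n.

Definition padic_add (p : nat) (a b : nat -> int) : nat -> int :=
  fun n => ((a n + b n) %% (p ^ n)%N%:Z)%Z.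

Definition Jp_embeds (T : grp) (p : nat) (A : T -> Prop) : Prop :=
  exists phi : (nat -> int) -> T,
    [/\ (forall a, padic p a -> A (phi a)),
        (forall a b, padic p a -> padic p b ->
           phi (padic_add p a b) = gmul (phi a) (phi b))
      & (forall a b, padic p a -> padic p b -> phi a = phi b ->
           forall n, a n = b n)].

Definition aut_on (T : grp) (H : T -> Prop) (f : T -> T) : Prop :=
  [/\ (forall x, H x -> H (f x)),
      (forall x y, H x -> H y -> f (gmul x y) = gmul (f x) (f y)),
      (forall y, H y -> exists2 x, H x & f x = y)
    & (forall x y, H x -> H y -> f x = f y -> x = y)].

Definition hom_on (T1 T2 : grp) (A : T1 -> Prop) (B : T2 -> Prop)
    (f : T1 -> T2) : Prop :=
  (forall x, A x -> B (f x)) /\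
  (forall x y, A x -> A y -> f (gmul x y) = gmul (f x) (f y)).

(* All the objects are placed inside fixed ambient groups:
   L = L_c (= L_m), N = N_c (= N_m) a predicate on L, T an ambient group in
   which the H's live as subgroups (H_c ⊆ H_m' ⊆ H_m), one function
   h : T -> L whose restrictions are h_c, h_m', h_m, one family
   F : L -> T -> T whose restrictions to H_c, H_m', H_m are F_c, F_m', F_m,
   one section hs = h^*_c = h^*_m and one predicate Hs = H^*_c = H^*_m.
   This encodes precisely the conditions H_c ⊆ H_m, h_c ⊆ h_m,
   F^l_c ⊆ F^l_m, h^*_m = h^*_c, H^*_m = H^*_c, L_m = L_c, N_m = N_c. *)

Section Objects.
Variables (L T : grp) (N : L -> Prop) (h : T -> L) (hs : L -> T)
          (F : L -> T -> T) (Hs : T -> Prop).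

(* (b_1..b_n) ∈ Q^{s}: sum_i s_i F^{b_i} restricted to Z(H) is 0;
   the pair (s, b) is encoded as the list of pairs (s_i, b_i). *)
Definition Qrel (H : T -> Prop) (sb : seq (int * L)) : Prop :=
  forall x, center H x ->
    gprod (map (fun p => zpow (F p.2 x) p.1) sb) = gone.

Definition Pset (H : T -> Prop) (p : nat) : Prop :=
  prime p /\ (has_p_torsion (center H) p \/ Jp_embeds p (center H)).

Definition isC4 (H : T -> Prop) : Prop :=
  [/\ normal_sub N /\ subgroup H,
      [/\ (forall l, aut_on H (F l)),
          (forall l1 l2 x, H x -> F (gmul l1 l2) x = F l1 (F l2 x))
        & (forall l1 l2, (forall x, H x -> F l1 x = F l2 x) -> l1 = l2)],
      [/\ hom_on H N h,
          (forall n, N n -> exists2 a, H a & h a = n),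
          (forall a, H a -> (h a = gone <-> center H a))
        & (forall a x, H a -> H x ->
             F (h a) x = gmul (gmul a x) (ginv a))],
      (forall n, N n -> H (hs n) /\ h (hs n) = n) /\
      reduced (center H) &
      [/\ subgroup Hs /\ (forall x, Hs x -> H x),
          (forall x, H x -> exists y z, [/\ Hs y, center H z & x = gmul y z]),
          (forall x, center Hs x <-> center H x /\ Hs x) /\
          (forall p, Pset H p ->
             (has_p_torsion (center H) p -> has_p_torsion (center Hs) p) /\
             (Jp_embeds p (center H) -> Jp_embeds p (center Hs))),
          quot_torsion_free (center H) (center Hs)
        & (forall p, prime p -> ~ Pset H p ->
             quot_p_divisible (center H) (center Hs) p)]].

Definition isC5 (H : T -> Prop) (G : zmodType) (FG : L -> G -> G) : Prop :=
  [/\ isC4 H /\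
      reduced (T := grp_of_zmod G) (fun _ => True),
      quot_torsion_free (T := grp_of_zmod G) (fun _ => True) (fun x => x = 0),
      (forall p, prime p -> ~ Jp_embeds (T := grp_of_zmod G) p (fun _ => True)),
      (forall l, aut_on (T := grp_of_zmod G) (fun _ => True) (FG l))
    & (forall sb, Qrel H sb ->
         forall y : G, \sum_(p <- sb) (FG p.2 y) *~ p.1 = 0)].

Definition inM (Hc Hm : T -> Prop) (G : zmodType) (FG : L -> G -> G) : Prop :=
  [/\ isC5 Hm FG /\
      (forall x, Hc x -> Hm x),
      (forall sb, Qrel Hm sb <-> Qrel Hc sb),
      (forall x, Hm x <-> generated (fun y => center Hm y \/ Hc y) x),
      (forall x, center Hc x <-> center Hm x /\ Hc x)
    & (forall p, Pset Hm p <-> Pset Hc p)].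

Definition free_over (Hc Hm' : T -> Prop) (G : zmodType) (FG : L -> G -> G)
    : Prop :=
  exists (I : Type) (f : I -> G -> T),
    [/\ (forall i, hom_on (T1 := grp_of_zmod G) (fun _ => True) (center Hm')
                          (f i)),
        (forall i (x y : G), f i x = f i y -> x = y),
        (forall i l (x : G), f i (FG l x) = F l (f i x)),
        (* Z(H_m') = (+)_i f_i(G) (+) Z(H_c) *)
        (forall x, center Hm' x ->
           exists (s : seq (I * G)) (z : T),
             [/\ List.NoDup (map fst s), center Hc z &
                 x = gmul (gprod (map (fun q => f q.1 q.2) s)) z])
      & (forall (s : seq (I * G)) (z : T),
           List.NoDup (map fst s) -> center Hc z ->
           gmul (gprod (map (fun q => f q.1 q.2) s)) z = gone ->
           z = gone /\ forall q, List.In q s -> q.2 = 0)].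

(* m is |N|^+-free over (c, g): every subgroup G' of Z(H_m)/Z(H_c) of
   cardinality <= |N| (i.e. < |N|^+) is contained in Z(H_m')/Z(H_c) for some
   m' ∈ M_c, m' <=_c m, free over (c, g).  A subgroup of the quotient is
   given by its preimage G'' (Z(H_c) ⊆ G'' ⊆ Z(H_m)); its cardinality is
   <= |N| iff there is an injection of G''/Z(H_c) into N. *)
Definition mu_free_N (Hc Hm : T -> Prop) (G : zmodType) (FG : L -> G -> G)
    : Prop :=
  forall G'' : T -> Prop,
    subgroup G'' ->
    (forall x, center Hc x -> G'' x) ->
    (forall x, G'' x -> center Hm x) ->
    (exists phi : T -> L,
        (forall x, G'' x -> N (phi x)) /\
        (forall x y, G'' x -> G'' y -> phi x = phi y ->
           center Hc (gmul x (ginv y)))) ->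
    exists Hm' : T -> Prop,
      [/\ inM Hc Hm' FG, (forall x, Hm' x -> Hm x), free_over Hc Hm' FG
        & (forall x, G'' x -> center Hm' x)].

End Objects.

From mathcomp Require Import all_boot all_algebra.
From HB Require Import structures.
From mathcomp Require Import boolp.
From Stdlib Require Import ClassicalEpsilon.

Set Implicit Arguments.
Unset Strict Implicit.
Unset Printing Implicit Defensive.

Import GRing.Theory.

(* The subgroup phi(N) Z(H_c) of Z(H_m) has at most |N| cosets of Z(H_c), so
   by |N|^+-freeness it lies in Z(H_m') for some free m' <= m, where
   Z(H_m') = (+)_i f_i(G) (+) Z(H_c) with each f_i(G) isomorphic to G.  Composing
   phi with the coordinate projection onto f_i(G) gives a homomorphism N -> G,
   which vanishes since Hom(N, G) = 0; hence phi takes its values in Z(H_c). *)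

Section GroupLemmas.
Variable T : grp.
Implicit Types x y z : T.

Lemma gmulrV x : gmul x (ginv x) = gone.
Proof.
rewrite -[gmul x _]gmul1 -(gmulV (ginv x)) -gmulA (gmulA (ginv x)) gmulV.
by rewrite gmul1 gmulV.
Qed.

Lemma gmulr1 x : gmul x gone = x.
Proof. by rewrite -(gmulV x) gmulA gmulrV gmul1. Qed.

Lemma gmulrI x : injective (gmul x).
Proof.
by move=> y z e; rewrite -(gmul1 y) -(gmulV x) -gmulA e gmulA gmulV gmul1.
Qed.

Lemma gmulIr x : injective (gmul^~ x).
Proof.
by move=> y z /= e; rewrite -(gmulr1 y) -(gmulrV x) gmulA e -gmulA gmulrV gmulr1.
Qed.

Lemma ginv_uniq x y : gmul y x = gone -> y = ginv x.
Proof. by move=> e; apply: (@gmulIr x); rewrite e gmulV. Qed.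

Lemma ginvM x y : ginv (gmul x y) = gmul (ginv y) (ginv x).
Proof. by apply/esym/ginv_uniq; rewrite -gmulA (gmulA (ginv x)) gmulV gmul1 gmulV. Qed.

Lemma gprod_cat (s1 s2 : seq T) : gprod (s1 ++ s2) = gmul (gprod s1) (gprod s2).
Proof. by elim: s1 => [|x s1 IH] /=; rewrite ?gmul1 // IH gmulA. Qed.

Lemma center_subgroup (H : T -> Prop) : subgroup H -> subgroup (center H).
Proof.
move=> [H1 HM HV]; split.
- by split=> // y _; rewrite gmul1 gmulr1.
- move=> x y [Hx cx] [Hy cy]; split; first exact: HM.
  by move=> w Hw; rewrite -gmulA cy // gmulA cx // gmulA.
- move=> x [Hx cx]; split; first exact: HV.
  move=> w Hw; apply: (@gmulrI x); rewrite !gmulA gmulrV gmul1 cx //.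
  by rewrite -gmulA gmulrV gmulr1.
Qed.

End GroupLemmas.

Section HomOn.
Variables (T1 T2 : grp) (A : T1 -> Prop) (B : T2 -> Prop) (f : T1 -> T2).
Hypotheses (sA : subgroup A) (f_hom : hom_on A B f).

Lemma hom_on1 : f gone = gone.
Proof.
have [A1 _ _] := sA; apply: (@gmulrI _ (f gone)).
by rewrite -f_hom.2 // gmul1 gmulr1.
Qed.

Lemma hom_onV x : A x -> f (ginv x) = ginv (f x).
Proof.
move=> Ax; have [_ _ AV] := sA; apply: ginv_uniq.
by rewrite -f_hom.2 ?gmulV ?hom_on1 //; apply: AV.
Qed.

End HomOn.

Section ImageMul.
Variables (L T : grp) (N : L -> Prop) (Z B : T -> Prop) (phi : L -> T).
Hypotheses (sN : subgroup N) (sZ : subgroup Z) (phi_hom : hom_on N B phi).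
Hypothesis phiC : forall n z, N n -> Z z -> gmul (phi n) z = gmul z (phi n).

Definition image_mul (x : T) : Prop :=
  exists2 n, N n & exists2 z, Z z & x = gmul (phi n) z.

Lemma image_mul_l n : N n -> image_mul (phi n).
Proof. by move=> Nn; exists n => //; exists gone; rewrite ?gmulr1 //; case: sZ. Qed.

Lemma image_mul_r z : Z z -> image_mul z.
Proof.
by move=> Zz; exists gone; [case: sN | exists z; rewrite ?(hom_on1 sN phi_hom) ?gmul1].
Qed.

Lemma image_mul_subgroup : subgroup image_mul.
Proof.
have [N1 NM NV] := sN; have [Z1 ZM ZV] := sZ; split.
- by rewrite -(hom_on1 sN phi_hom); apply: image_mul_l.
- move=> _ _ [n1 Nn1 [z1 Zz1 ->]] [n2 Nn2 [z2 Zz2 ->]].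
  exists (gmul n1 n2); first exact: NM.
  exists (gmul z1 z2); first exact: ZM.
  by rewrite phi_hom.2 // -!gmulA; congr gmul; rewrite !gmulA phiC.
- move=> _ [n Nn [z Zz ->]]; exists (ginv n); first exact: NV.
  exists (ginv z); first exact: ZV.
  by rewrite ginvM phiC ?(hom_onV sN phi_hom); auto.
Qed.

Lemma image_mul_quotient_inj :
  exists psi : T -> L,
    (forall x, image_mul x -> N (psi x)) /\
    (forall x y, image_mul x -> image_mul y -> psi x = psi y ->
       Z (gmul x (ginv y))).
Proof.
pose P x n := N n /\ exists2 z, Z z & x = gmul (phi n) z.
have PE x : image_mul x -> P x (epsilon (inhabits gone) (P x)).
  by move=> [n Nn Ex]; apply: epsilon_spec; exists n.
exists (fun x => epsilon (inhabits gone) (P x)).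
split=> [x /PE [] //|x y Ix Iy /= e].
have [_ [z1 Zz1 ->]] := PE x Ix; have [Nn [z2 Zz2 ->]] := PE y Iy.
rewrite e; move: (epsilon _ _) Nn => n Nn.
have [_ ZM ZV] := sZ; have [_ _ NV] := sN.
rewrite ginvM -(hom_onV sN phi_hom) // -gmulA (gmulA z1) -phiC; [|exact: NV|by auto].
by rewrite gmulA -phi_hom.2 ?gmulrV ?(hom_on1 sN phi_hom) ?gmul1; auto.
Qed.

End ImageMul.

Lemma InP (X : eqType) (x : X) (s : seq X) : reflect (List.In x s) (x \in s).
Proof.
elim: s => [|y s IH]; first by constructor.
rewrite inE; apply: (iffP orP) => [[/eqP ->|/IH]|[->|/IH]]; by [left|right|left].
Qed.

Lemma uniq_NoDup (X : eqType) (s : seq X) : uniq s -> List.NoDup s.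
Proof.
elim: s => [_|x s IH] /=; first exact: List.NoDup_nil.
by case/andP=> /InP xs /IH; apply: List.NoDup_cons.
Qed.

Record abelian_subgroup (T : grp) := AbelianSubgroup {
  ab_mem : T -> Prop;
  ab_subgroupP : subgroup ab_mem;
  ab_memC : forall x y, ab_mem x -> ab_mem y -> gmul x y = gmul y x }.

Definition center_abelian (T : grp) (H : T -> Prop) (sH : subgroup H) :=
  AbelianSubgroup (center_subgroup sH) (fun x y cx cy => cx.2 y cy.1).

Section AbelianElt.
Variables (T : grp) (A : abelian_subgroup T).

Lemma ab_mem1 : ab_mem A gone.
Proof. by case: (ab_subgroupP A). Qed.

Lemma ab_memM x y : ab_mem A x -> ab_mem A y -> ab_mem A (gmul x y).
Proof. by case: (ab_subgroupP A) => _ + _; apply. Qed.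

Lemma ab_memV x : ab_mem A x -> ab_mem A (ginv x).
Proof. by case: (ab_subgroupP A) => _ _; apply. Qed.

Definition ab_elt := {x : T | ab_mem A x}.
HB.instance Definition _ := gen_eqMixin ab_elt.
HB.instance Definition _ := gen_choiceMixin ab_elt.

Lemma ab_elt_inj : injective (@sval T (ab_mem A) : ab_elt -> T).
Proof. by move=> [x px] [y py] /= exy; apply: eq_exist. Qed.

Definition ab_zero : ab_elt := exist _ gone ab_mem1.
Definition ab_add (a b : ab_elt) : ab_elt :=
  exist _ (gmul (sval a) (sval b)) (ab_memM (svalP a) (svalP b)).
Definition ab_opp (a : ab_elt) : ab_elt := exist _ (ginv (sval a)) (ab_memV (svalP a)).

Lemma ab_addA : associative ab_add.
Proof. by move=> a b c; apply: ab_elt_inj; rewrite /= gmulA. Qed.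
Lemma ab_addC : commutative ab_add.
Proof. by move=> a b; apply: ab_elt_inj; rewrite /= (ab_memC (svalP a) (svalP b)). Qed.
Lemma ab_add0 : left_id ab_zero ab_add.
Proof. by move=> a; apply: ab_elt_inj; rewrite /= gmul1. Qed.
Lemma ab_addN : left_inverse ab_zero ab_opp ab_add.
Proof. by move=> a; apply: ab_elt_inj; rewrite /= gmulV. Qed.

HB.instance Definition _ :=
  GRing.isZmodule.Build ab_elt ab_addA ab_addC ab_add0 ab_addN.

Lemma ab_valD (a b : ab_elt) : sval (a + b)%R = gmul (sval a) (sval b).
Proof. by []. Qed.

End AbelianElt.

Section Coordinates.
Local Open Scope ring_scope.
Variables (T : grp) (A : abelian_subgroup T) (I : eqType) (G : zmodType).
Variables (f : I -> G -> T) (Z : T -> Prop).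
Hypotheses (f_mem : forall i g, ab_mem A (f i g)) (Z_mem : forall z, Z z -> ab_mem A z).
Hypothesis fD : forall i a b, f i (a + b) = gmul (f i a) (f i b).
Hypothesis sZ : subgroup Z.
Hypothesis f_indep : forall (s : seq (I * G)) z,
  List.NoDup (map fst s) -> Z z ->
  gmul (gprod (map (fun q => f q.1 q.2) s)) z = gone ->
  forall q, List.In q s -> q.2 = 0.

Definition fA i g : ab_elt A := exist _ (f i g) (f_mem i g).

Lemma fA_nmod_morphism i : nmod_morphism (fA i).
Proof.
have fAD a b : fA i (a + b) = fA i a + fA i b by apply: ab_elt_inj; rewrite /= fD.
by split=> //; apply: (@addrI _ (fA i 0)); rewrite -fAD !addr0.
Qed.

HB.instance Definition _ i :=
  GRing.isNmodMorphism.Build G (ab_elt A) (fA i) (fA_nmod_morphism i).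

Definition gprodf (s : seq (I * G)) : T := gprod (map (fun q => f q.1 q.2) s).
Definition seq_sum (s : seq (I * G)) : ab_elt A := \sum_(q <- s) fA q.1 q.2.
Definition seq_coord (s : seq (I * G)) (i : I) : G := \sum_(q <- s | q.1 == i) q.2.

Lemma seq_sumE s : sval (seq_sum s) = gprodf s.
Proof.
rewrite /seq_sum /gprodf; elim: s => [|q s IH]; first by rewrite big_nil.
by rewrite big_cons /= -IH.
Qed.

Lemma seq_sum_undup s :
  seq_sum s = \sum_(i <- undup (map fst s)) fA i (seq_coord s i).
Proof.
under eq_bigr do rewrite raddf_sum big_mkcond /=.
rewrite exchange_big /seq_sum; apply: eq_big_seq => q qs /=.
rewrite (bigD1_seq q.1) ?undup_uniq ?mem_undup ?map_f //= eqxx big1 ?addr0 //.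
by move=> j /negbTE; rewrite eq_sym => ->.
Qed.

Lemma seq_sum_indep s z : Z (sval z) -> seq_sum s + z = 0 -> seq_coord s =1 fun=> 0.
Proof.
move=> Zz sz0 i; pose s' := [seq (j, seq_coord s j) | j <- undup (map fst s)].
have nodup_s' : List.NoDup (map fst s').
  by rewrite -map_comp map_id; apply/uniq_NoDup/undup_uniq.
have s'_gone : gmul (gprodf s') (sval z) = gone.
  by rewrite -seq_sumE -ab_valD [seq_sum s']big_map -seq_sum_undup sz0.
have [i_s|i_notin] := boolP (i \in undup (map fst s)).
  apply: (f_indep nodup_s' Zz s'_gone (q := (i, seq_coord s i))).
  by apply/InP/map_f.
apply: big1_seq => q /andP [/eqP qi qs]; case/negP: i_notin.
by rewrite mem_undup -qi map_f.
Qed.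

(* Unlike in [free_over], indices may repeat: decompositions then multiply
   by concatenation ([decompositionM]). *)
Definition decomposition (x : T) (p : seq (I * G) * T) : Prop :=
  Z p.2 /\ x = gmul (gprodf p.1) p.2.

Definition decomposable (x : T) : Prop := exists p, decomposition x p.

Definition coord (x : T) : I -> G :=
  seq_coord (epsilon (inhabits ([::], gone)) (decomposition x)).1.

Lemma decomposition_uniq x p1 p2 :
  decomposition x p1 -> decomposition x p2 -> seq_coord p1.1 =1 seq_coord p2.1.
Proof.
move=> [Z1 e1] [Z2 e2] i; have [_ ZM ZV] := sZ.
pose z1 : ab_elt A := exist _ p1.2 (Z_mem Z1).
pose z2 : ab_elt A := exist _ p2.2 (Z_mem Z2).
have e12 : seq_sum p1.1 + z1 = seq_sum p2.1 + z2.
  by apply: ab_elt_inj; rewrite !ab_valD !seq_sumE -e1 -e2.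
have := @seq_sum_indep (p1.1 ++ [seq (q.1, - q.2) | q <- p2.1]) (z1 - z2)
  (ZM _ _ Z1 (ZV _ Z2)).
rewrite /seq_sum big_cat big_map /=; under [X in _ + X + _]eq_bigr do rewrite raddfN.
rewrite sumrN addrACA -opprD e12 subrr => /(_ erefl i).
by rewrite /seq_coord big_cat big_map sumrN => /eqP; rewrite subr_eq0 => /eqP.
Qed.

Lemma coordE x p : decomposition x p -> coord x =1 seq_coord p.1.
Proof.
by move=> dx; apply: (decomposition_uniq _ dx); apply: epsilon_spec; exists p.
Qed.

Lemma decompositionM x y p1 p2 :
  decomposition x p1 -> decomposition y p2 ->
  decomposition (gmul x y) (p1.1 ++ p2.1, gmul p1.2 p2.2).
Proof.
move=> [Z1 ->] [Z2 ->]; split; first by case: sZ => _ ZM _; apply: ZM.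
rewrite /gprodf map_cat gprod_cat -/(gprodf _) -/(gprodf _) -!gmulA; congr gmul.
rewrite !gmulA; congr gmul; apply: ab_memC; first exact: Z_mem.
by rewrite -seq_sumE; apply: svalP.
Qed.

Lemma coordM x y p1 p2 : decomposition x p1 -> decomposition y p2 ->
  forall i, coord (gmul x y) i = coord x i + coord y i.
Proof.
move=> d1 d2 i.
by rewrite (coordE (decompositionM d1 d2)) (coordE d1) (coordE d2) /seq_coord big_cat.
Qed.

Lemma coord_eq0 x p : decomposition x p -> coord x =1 (fun=> 0) -> Z x.
Proof.
move=> dx coord0; have [Zz ->] := dx.
suff -> : gprodf p.1 = gone by rewrite gmul1.
rewrite -seq_sumE seq_sum_undup big1 // => i _.
by rewrite -(coordE dx) coord0 raddf0.
Qed.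

Lemma hom_decomposable_in_base (L : grp) (N : L -> Prop) (phi : L -> T) :
  (forall g : L -> G, hom_on (T2 := grp_of_zmod G) N (fun _ => True) g ->
     forall n, N n -> g n = 0) ->
  hom_on N decomposable phi -> forall n, N n -> Z (phi n).
Proof.
move=> hom_N_G0 [phi_dec phiM] n Nn; have [p dp] := phi_dec n Nn.
apply: (coord_eq0 dp) => i; apply: (hom_N_G0 (fun m => coord (phi m) i)) => //.
split=> // a b Na Nb; have [p1 d1] := phi_dec a Na; have [p2 d2] := phi_dec b Nb.
by rewrite phiM // (coordM d1 d2).
Qed.

End Coordinates.

Theorem lemma4p3 (L T : grp) (N : L -> Prop) (h : T -> L) (hs : L -> T)
    (F : L -> T -> T) (Hs : T -> Prop) (Hc Hm : T -> Prop)
    (G : zmodType) (FG : L -> G -> G) :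
  (* (c, g) ∈ C^5_aut *)
  isC5 N h hs F Hs Hc FG ->
  (* Hom(N_c, G_g) = 0 *)
  (forall f : L -> G,
     hom_on (T2 := grp_of_zmod G) N (fun _ => True) f ->
     forall n, N n -> f n = 0%R) ->
  (* m ∈ M_c *)
  inM N h hs F Hs Hc Hm FG ->
  (* m is |N_c|^+-free over (c, g) *)
  mu_free_N N h hs F Hs Hc Hm FG ->
  (* Hom(N_c, Z(H_m)) ⊆ Hom(N_c, H_c) *)
  forall phi : L -> T, hom_on N (center Hm) phi ->
    forall n, N n -> Hc (phi n).
Proof.
move=> [[[[[sN _] sHc] _ _ _ _] _] _ _ _ _] hom_N_G0.
move=> [[[[[[_ sHm] _ _ _ _] _] _ _ _ _] _] _ _ Zc_Zm _] m_free phi phi_hom.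
have Zc_sub z : center Hc z -> center Hm z by case/Zc_Zm.
have phiC n z : N n -> center Hc z -> gmul (phi n) z = gmul z (phi n).
  by move=> Nn /Zc_sub[Hz _]; apply: (phi_hom.1 n Nn).2 z Hz.
have sZc := center_subgroup sHc.
have G2_Zm x : image_mul N (center Hc) phi x -> center Hm x.
  move=> [n Nn [z /Zc_sub Zz ->]]; have [_ ZmM _] := center_subgroup sHm.
  exact: ZmM (phi_hom.1 n Nn) Zz.
have [Hm' [[[[[[[_ sHm'] _ _ _ _] _] _ _ _ _] _] _ _ Zc_Zm' _] _ m'_free G2_Zm']]
  := m_free _ (image_mul_subgroup sN sZc phi_hom phiC) (image_mul_r sN phi_hom)
       G2_Zm (image_mul_quotient_inj sN sZc phi_hom phiC).
have [I [f [f_hom _ _ f_dec f_indep]]] := m'_free.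
suff phi_Zc n : N n -> center Hc (phi n) by move=> n /phi_Zc [].
apply: (@hom_decomposable_in_base _ (center_abelian sHm') {classic I} _ f)
  hom_N_G0 _ n => //.
- by move=> i g; apply: (f_hom i).1.
- by move=> z /Zc_Zm' [].
- by move=> i a b; apply: (f_hom i).2.
- by move=> s z nd Zz e; case: (f_indep s z nd Zz e).
- split; last exact: phi_hom.2.
  move=> n Nn; have := G2_Zm' _ (image_mul_l phi sZc Nn).
  by case/f_dec=> s [z [_ Zz e]]; exists (s, z).
Qed.
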